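(* Let $\kappa$ be a regular infinite cardinal and let $\langle W^\kappa,(T_i)_{i\in\{a,b\}},\theta\rangle$ be the $*$-type space described in the context. For $i\in\{a,b\}$, $j$ the other player, and $\overline B_i^1(E)=\{w\in W^\kappa:T_i(w)(E)\ge1\}$: $[X_i^\kappa(0)=1]=\overline B_i^1([X_0^\kappa=h])\cup\overline B_i^1([X_0^\kappa=t])$; for all $\beta<\kappa$, $[X_i^\kappa(\beta+1)=1]=\overline B_i^1([X_j^\kappa(\beta)=1])\cup\overline B_i^1([X_j^\kappa(\beta)=0])$; for all limit $\lambda<\kappa$, $[X_i^\kappa(\lambda)=1]=\overline B_i^1([\lambda\text{-par}(X_j^\kappa)=\text{even}])\cup\overline B_i^1([\lambda\text{-par}(X_j^\kappa)=\text{odd}])$.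
   Context: Records: for $\alpha\ge1$, a record of length $\alpha$ is $r\in\{0,1\}^\alpha$ such that for every limit $\lambda\le\alpha$ there is $\gamma<\lambda$ with $r(\beta)=0$ for $\gamma\le\beta<\lambda$. Parity: finite ordinals usual (0 even); infinite $\hat\lambda+n$ ($\hat\lambda$ limit) has the parity of $n$. For limit $\lambda\le\alpha$, $o^\lambda(r)$ is the least ordinal $<\lambda$ after which $r$ is $0$ below $\lambda$; $\lambda\text{-par}(r)$ is its parity. $W^0=\{h,t\}$; $W^\alpha$ ($\alpha\ge1$) = triples $(w_0,w_a^\alpha,w_b^\alpha)$, $w_0\in\{h,t\}$, $w_a^\alpha,w_b^\alpha$ records of length $\alpha$; $w^\alpha\upharpoonright\beta$ restricts both records (and $w^\alpha\upharpoonright0=w_0$); $\pi_{\beta,\alpha}(w^\alpha)=w^\alpha\upharpoonright\beta$. $P_i(w^\alpha)$: set of $v^\alpha$ with $v_i^\alpha=w_i^\alpha$; $w_i^\alpha(0)=1\Rightarrow v_0=w_0$; $w_i^\alpha(\beta+1)=1\Rightarrow v_j^\alpha(\beta)=w_j^\alpha(\beta)$ ($\beta+1<\alpha$); $w_i^\alpha(\lambda)=1\Rightarrow\lambda\text{-par}(v_j^\alpha)=\lambda\text{-par}(w_j^\alpha)$ (limit $\lambda<\alpha$). $T_a,T_b$ map $W^\kappa$ into finitely additive probability measures on $\mathrm{Pow}(W^\kappa)$ and satisfy for all $w^\kappa$: (a) $T_i$ constant on $P_i(w^\kappa)$; (b) $T_i(w^\kappa)(P_i(w^\kappa))=1$;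 (c) $T_i(w^\kappa)([X_0^\kappa=w_0])=1$ if $w_i^\kappa(0)=1$, $\frac12$ otherwise; (d) for $\beta<\kappa$, $T_i(w^\kappa)([X_j^\kappa(\beta)=w_j^\kappa(\beta)])=1$ if $w_i^\kappa(\beta+1)=1$, $\frac12$ otherwise; (e) for limit $\lambda<\kappa$, $T_i(w^\kappa)([\lambda\text{-par}(X_j^\kappa)=\lambda\text{-par}(w_j^\kappa)])=1$ if $w_i^\kappa(\lambda)=1$, $\frac12$ otherwise; (f) for $\beta<\alpha<\kappa$, $E^\beta\subseteq W^\beta$, $u^\kappa\upharpoonright\alpha=w^\kappa\upharpoonright\alpha$ implies equal $T_i$-values on $\pi_{\beta,\kappa}^{-1}(E^\beta)$. $\theta(w^\kappa)=w_0$. Notation: $[X_0^\kappa=c]=\{u:u_0=c\}$, $[X_i^\kappa(\beta)=c]=\{u:u_i^\kappa(\beta)=c\}$, $[\lambda\text{-par}(X_i^\kappa)=e]=\{u:\lambda\text{-par}(u_i^\kappa)=e\}$. *)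

(* ordinals below kappa are modelled by a well-ordered type
   (O, lt); real numbers are Stdlib's R. *)
From Stdlib Require Import Reals.
Open Scope R_scope.

Inductive coin := h | t.
Inductive player := pa | pb.
Definition other (i : player) : player := match i with pa => pb | pb => pa end.

Section Ordinals.
Variables (O : Type) (lt : O -> O -> Prop).
Definition le (x y : O) : Prop := lt x y \/ x = y.

Definition strict_well_order : Prop :=
  (forall x, ~ lt x x) /\
  (forall x y z, lt x y -> lt y z -> lt x z) /\
  (forall x y, lt x y \/ x = y \/ lt y x) /\
  well_founded lt.

Definition regular_infinite_cardinal : Prop :=
  inhabited O /\
  (* infinite: no largest ordinal below kappa *)
  (forall x, exists y, lt x y) /\
  (* cardinal: kappa does not inject into any smaller ordinal *)
  (forall x, ~ exists f : O -> {y | lt y x}, forall a b, f a = f b -> a = b) /\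
  (* regular: every cofinal subset of kappa has cardinality kappa *)
  (forall S : O -> Prop, (forall x, exists y, S y /\ le x y) ->
     forall x, ~ exists f : {y | S y} -> {y | lt y x},
        forall a b, f a = f b -> a = b).

Definition is_zero (z : O) : Prop := forall y, ~ lt y z.
Definition is_succ_of (b s : O) : Prop := lt b s /\ forall y, lt b y -> le s y.
Definition is_limit (l : O) : Prop := ~ is_zero l /\ ~ exists b, is_succ_of b l.

(* parity: par x true  <-> x is odd ; par x false <-> x is even *)
Inductive par : O -> bool -> Prop :=
  | par_base : forall x, (is_zero x \/ is_limit x) -> par x false
  | par_succ : forall b s e, par b e -> is_succ_of b s -> par s (negb e).

Definition zero_on (r : O -> bool) (g l : O) : Prop :=
  forall x, le g x -> lt x l -> r x = false.

(* records of length kappa: the condition for every limit l < kappa and for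
   l = kappa itself (kappa being a limit ordinal) *)
Definition is_record (r : O -> bool) : Prop :=
  (forall l, is_limit l -> exists g, lt g l /\ zero_on r g l) /\
  (exists g, forall x, le g x -> r x = false).

Definition o_lim (r : O -> bool) (l o : O) : Prop :=
  lt o l /\ zero_on r o l /\ (forall g, lt g l -> zero_on r g l -> le o g).

Definition lpar (r : O -> bool) (l : O) (e : bool) : Prop :=
  exists o, o_lim r l o /\ par o e.

Record W := mkW {
  w0 : coin; wa : O -> bool; wb : O -> bool;
  wa_rec : is_record wa; wb_rec : is_record wb }.

Definition rec (i : player) (w : W) : O -> bool :=
  match i with pa => wa w | pb => wb w end.

Definition P (i : player) (w v : W) : Prop :=
  (forall x, rec i v x = rec i w x) /\
  (forall z, is_zero z -> rec i w z = true -> w0 v = w0 w) /\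
  (forall b s, is_succ_of b s -> rec i w s = true ->
      rec (other i) v b = rec (other i) w b) /\
  (forall l, is_limit l -> rec i w l = true ->
      forall e, lpar (rec (other i) v) l e <-> lpar (rec (other i) w) l e).

Definition fa_prob (mu : (W -> Prop) -> R) : Prop :=
  mu (fun _ => True) = 1 /\
  (forall A, 0 <= mu A) /\
  (forall A B, (forall x, A x -> B x -> False) ->
     mu (fun x => A x \/ B x) = mu A + mu B) /\
  (forall A B, (forall x, A x <-> B x) -> mu A = mu B).

Definition restr_eq (a : O) (u w : W) : Prop :=
  w0 u = w0 w /\ forall g, lt g a -> wa u g = wa w g /\ wb u g = wb w g.

Definition preim (b : O)
  (E : coin -> ({g | lt g b} -> bool) -> ({g | lt g b} -> bool) -> Prop)
  : W -> Prop :=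
  fun x => E (w0 x) (fun g => wa x (proj1_sig g)) (fun g => wb x (proj1_sig g)).

Definition star_type_space (T : player -> W -> (W -> Prop) -> R) : Prop :=
  (forall i w, fa_prob (T i w)) /\
  (* (a) *)
  (forall i w v, P i w v -> forall E, T i v E = T i w E) /\
  (* (b) *)
  (forall i w, T i w (P i w) = 1) /\
  (* (c) *)
  (forall i w z, is_zero z ->
     T i w (fun u => w0 u = w0 w) = if rec i w z then 1 else / 2) /\
  (* (d) *)
  (forall i w b s, is_succ_of b s ->
     T i w (fun u => rec (other i) u b = rec (other i) w b)
       = if rec i w s then 1 else / 2) /\
  (* (e) *)
  (forall i w l, is_limit l ->
     T i w (fun u => exists e, lpar (rec (other i) w) l e /\
                               lpar (rec (other i) u) l e)
       = if rec i w l then 1 else / 2) /\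
  (* (f) *)
  (forall i b a, lt b a -> forall E u w, restr_eq a u w ->
     T i u (preim b E) = T i w (preim b E)).

Definition Bbar1 (T : player -> W -> (W -> Prop) -> R) (i : player)
  (E : W -> Prop) : W -> Prop := fun w => T i w E >= 1.

End Ordinals.

Arguments mkW {O lt}.
Arguments w0 {O lt}.
Arguments wa {O lt}.
Arguments wb {O lt}.
Arguments rec {O lt}.

(** Each clause of the theorem concerns a single measure [mu := T i w] and a
    pair of disjoint events [A], [B] (heads/tails, bit 1/bit 0, even/odd
    parity), one of which is the event named in conditions (c)-(e); that
    event has [mu]-probability [1] if the relevant bit of [w] is set and
    [1/2] otherwise.  Since [mu A + mu B <= 1], one of [A], [B] is certain
    exactly when the bit is set.  For limits, the event of (e) coincides with
    [lpar = e0] for the unique parity [e0] of [w]'s record, which exists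
    because records are eventually zero below every limit. *)

From Stdlib Require Import Reals Lra Classical.
Open Scope R_scope.

Section FiniteAdditivity.
Variables (O : Type) (lt : O -> O -> Prop) (mu : (W O lt -> Prop) -> R).
Hypothesis Hmu : fa_prob O lt mu.

Lemma fa_prob_disjoint_le1 (A B : W O lt -> Prop) :
  (forall x, A x -> B x -> False) -> mu A + mu B <= 1.
Proof.
  intro Hdis; destruct Hmu as [Htot [Hge0 [Hadd Hext]]].
  set (C := fun x => A x \/ B x).
  assert (HC : mu C = mu A + mu B) by (apply Hadd; exact Hdis).
  assert (Hsplit : mu (fun x => C x \/ ~ C x) = mu C + mu (fun x => ~ C x))
    by (apply Hadd; tauto).
  assert (Hfull : mu (fun x => C x \/ ~ C x) = mu (fun _ => True))
    by (apply Hext; intro x; tauto).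
  pose proof (Hge0 (fun x => ~ C x)); lra.
Qed.

Lemma fa_prob_one_or_half_iff (A B X : W O lt -> Prop) (b : bool) :
  (forall x, A x -> B x -> False) ->
  (forall x, X x <-> A x) \/ (forall x, X x <-> B x) ->
  mu X = (if b then 1 else / 2) ->
  b = true <-> (mu A >= 1 \/ mu B >= 1).
Proof.
  intros Hdis HX HXb.
  pose proof (fa_prob_disjoint_le1 A B Hdis) as Hle.
  destruct Hmu as [_ [Hge0 [_ Hext]]].
  pose proof (Hge0 A); pose proof (Hge0 B).
  destruct HX as [HX | HX]; rewrite (Hext _ _ HX) in HXb;
    destruct b; split; intros; (reflexivity || lra).
Qed.

End FiniteAdditivity.

Section Parity.
Variables (O : Type) (lt : O -> O -> Prop).
Hypothesis Hwo : strict_well_order O lt.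

Lemma is_succ_of_inj (b b' s : O) :
  is_succ_of O lt b s -> is_succ_of O lt b' s -> b = b'.
Proof.
  destruct Hwo as [Hirr [Htr [Htri _]]].
  intros [Hbs Hb] [Hb's Hb'].
  destruct (Htri b b') as [Hlt | [Heq | Hlt]]; [| exact Heq |].
  - exfalso; destruct (Hb _ Hlt) as [Hx | <-];
      [apply (Hirr s); eauto | exact (Hirr s Hb's)].
  - exfalso; destruct (Hb' _ Hlt) as [Hx | <-];
      [apply (Hirr s); eauto | exact (Hirr s Hbs)].
Qed.

Lemma par_functional (x : O) (e1 e2 : bool) :
  par O lt x e1 -> par O lt x e2 -> e1 = e2.
Proof.
  intro H1; revert e2.
  induction H1 as [x Hx | b s e Hb IH Hs]; intros e2 H2; inversion H2; subst.
  - reflexivity.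
  - exfalso; destruct Hx as [Hz | [_ Hl]]; [apply (Hz b) | apply Hl; exists b];
      apply H0.
  - exfalso; destruct H as [Hz | [_ Hl]]; [apply (Hz b) | apply Hl; exists b];
      apply Hs.
  - rewrite (is_succ_of_inj b b0 s Hs H0) in IH.
    now rewrite (IH _ H).
Qed.

Lemma par_total (x : O) : exists e, par O lt x e.
Proof.
  destruct Hwo as [_ [_ [_ Hwf]]].
  induction x as [x IH] using (well_founded_ind Hwf).
  destruct (classic (exists b, is_succ_of O lt b x)) as [[b Hb] | Hnsucc].
  - destruct (IH b (proj1 Hb)) as [e He].
    exists (negb e); eapply par_succ; eauto.
  - exists false; apply par_base.
    destruct (classic (is_zero O lt x)); [left | right; split]; auto.
Qed.

Lemma wf_least (Q : O -> Prop) :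
  (exists x, Q x) -> exists m, Q m /\ forall y, Q y -> le O lt m y.
Proof.
  destruct Hwo as [_ [_ [Htri Hwf]]].
  intros [x Hx]; apply NNPP; intro Hnone.
  induction x as [x IH] using (well_founded_ind Hwf).
  apply Hnone; exists x; split; [exact Hx |].
  intros y Hy; destruct (Htri x y) as [Hlt | [Heq | Hlt]].
  - now left.
  - now right.
  - exfalso; exact (IH y Hlt Hy).
Qed.

Lemma lpar_functional (r : O -> bool) (l : O) (e1 e2 : bool) :
  lpar O lt r l e1 -> lpar O lt r l e2 -> e1 = e2.
Proof.
  intros [o1 [[Ho1 [Hz1 Hmin1]] Hp1]] [o2 [[Ho2 [Hz2 Hmin2]] Hp2]].
  assert (o1 = o2) as <-.
  { destruct Hwo as [Hirr [Htr _]].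
    destruct (Hmin1 _ Ho2 Hz2) as [H12 | H12]; [| exact H12].
    destruct (Hmin2 _ Ho1 Hz1) as [H21 | H21]; [| now symmetry].
    exfalso; apply (Hirr o1); eauto. }
  exact (par_functional o1 e1 e2 Hp1 Hp2).
Qed.

Lemma lpar_total (r : O -> bool) (l : O) :
  is_record O lt r -> is_limit O lt l -> exists e, lpar O lt r l e.
Proof.
  intros [Hr _] Hl.
  destruct (wf_least (fun g => lt g l /\ zero_on O lt r g l) (Hr l Hl))
    as [m [[Hml Hmz] Hmin]].
  destruct (par_total m) as [e He].
  exists e, m; repeat split; auto.
Qed.

Lemma lpar_agree_iff (r r' : O -> bool) (l : O) (e0 : bool) :
  lpar O lt r l e0 ->
  (exists e, lpar O lt r l e /\ lpar O lt r' l e) <-> lpar O lt r' l e0.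
Proof.
  intro He0; split.
  - intros [e [He He']]; now rewrite (lpar_functional r l e0 e He0 He).
  - intro He0'; now exists e0.
Qed.

End Parity.

Lemma rec_is_record (O : Type) (lt : O -> O -> Prop) (i : player) (w : W O lt) :
  is_record O lt (rec i w).
Proof. destruct i; [apply wa_rec | apply wb_rec]. Qed.

Section StarTypeSpace.
Variables (O : Type) (lt : O -> O -> Prop).
Hypothesis Hwo : strict_well_order O lt.
Variable T : player -> W O lt -> (W O lt -> Prop) -> R.
Hypothesis HT : star_type_space O lt T.

Lemma rec_zero_iff_Bbar1 (i : player) (z : O) (w : W O lt) :
  is_zero O lt z ->
  rec i w z = true <->
  (Bbar1 O lt T i (fun u => w0 u = h) w \/ Bbar1 O lt T i (fun u => w0 u = t) w).
Proof.
  destruct HT as [Hfa [_ [_ [Hc _]]]]; intro Hz.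
  apply (fa_prob_one_or_half_iff O lt (T i w) (Hfa i w)
           _ _ (fun u => w0 u = w0 w)); [congruence | | exact (Hc i w z Hz)].
  destruct (w0 w); [left | right]; tauto.
Qed.

Lemma rec_succ_iff_Bbar1 (i : player) (b s : O) (w : W O lt) :
  is_succ_of O lt b s ->
  rec i w s = true <->
  (Bbar1 O lt T i (fun u => rec (other i) u b = true) w \/
   Bbar1 O lt T i (fun u => rec (other i) u b = false) w).
Proof.
  destruct HT as [Hfa [_ [_ [_ [Hd _]]]]]; intro Hs.
  apply (fa_prob_one_or_half_iff O lt (T i w) (Hfa i w)
           _ _ (fun u => rec (other i) u b = rec (other i) w b));
    [congruence | | exact (Hd i w b s Hs)].
  destruct (rec (other i) w b); [left | right]; tauto.
Qed.

Lemma rec_limit_iff_Bbar1 (i : player) (l : O) (w : W O lt) :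
  is_limit O lt l ->
  rec i w l = true <->
  (Bbar1 O lt T i (fun u => lpar O lt (rec (other i) u) l false) w \/
   Bbar1 O lt T i (fun u => lpar O lt (rec (other i) u) l true) w).
Proof.
  destruct HT as [Hfa [_ [_ [_ [_ [He _]]]]]]; intro Hl.
  destruct (lpar_total O lt Hwo _ l (rec_is_record O lt (other i) w) Hl)
    as [e0 He0].
  apply (fa_prob_one_or_half_iff O lt (T i w) (Hfa i w) _ _
           (fun u => exists e, lpar O lt (rec (other i) w) l e /\
                               lpar O lt (rec (other i) u) l e));
    [| | exact (He i w l Hl)].
  - intros u Hev Hodd; discriminate (lpar_functional O lt Hwo _ _ _ _ Hev Hodd).
  - pose proof (fun u : W O lt => lpar_agree_iff O lt Hwo _ (rec (other i) u) l e0 He0).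
    destruct e0; [right | left]; assumption.
Qed.

End StarTypeSpace.

Theorem lemma8 (O : Type) (lt : O -> O -> Prop)
  (Hwo : strict_well_order O lt)
  (Hkappa : regular_infinite_cardinal O lt)
  (T : player -> W O lt -> (W O lt -> Prop) -> R)
  (HT : star_type_space O lt T) :
  forall i : player,
  (forall z, is_zero O lt z -> forall w : W O lt,
     rec i w z = true <->
     (Bbar1 O lt T i (fun u => w0 u = h) w \/ Bbar1 O lt T i (fun u => w0 u = t) w)) /\
  (forall b s, is_succ_of O lt b s -> forall w : W O lt,
     rec i w s = true <->
     (Bbar1 O lt T i (fun u => rec (other i) u b = true) w \/
      Bbar1 O lt T i (fun u => rec (other i) u b = false) w)) /\
  (forall l, is_limit O lt l -> forall w : W O lt,
     rec i w l = true <->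
     (Bbar1 O lt T i (fun u => lpar O lt (rec (other i) u) l false) w \/
      Bbar1 O lt T i (fun u => lpar O lt (rec (other i) u) l true) w)).
Proof.
  intro i; split; [| split].
  - intros z Hz w; exact (rec_zero_iff_Bbar1 O lt T HT i z w Hz).
  - intros b s Hs w; exact (rec_succ_iff_Bbar1 O lt T HT i b s w Hs).
  - intros l Hl w; exact (rec_limit_iff_Bbar1 O lt Hwo T HT i l w Hl).
Qed.
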